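(* Let $R,Q,S$ be rod sets. The following are equivalent: (1) $R\xrightarrow{Q}S$; (2) $D(n,R,S)=C(n,Q)$ for all $n>0$; (3) $\langle\mathrm{Trains}(R)\rangle\equiv\langle\mathrm{Trains}(S)\rangle\cup Q\cup\langle\mathrm{Trains}(S)\rangle Q$; (4) for all $n>0$, $F(n,R)=F(n,S)+\sum_{q\in Q}(\operatorname{sign}q)F(n-\operatorname{len}q,S)$.
   Context: A rod is a triple $(r,c,\varepsilon)$ with $r$ a positive integer (length), $c$ a tag (color), $\varepsilon\in\{\pm1\}$ (sign); antirods have sign $-1$. A rod set is a set of rods with finitely many of each length. A train built from $R$ is a finite sequence of rods of $R$ (including the empty train), with length the sum of lengths and sign the product of signs; $\mathrm{Trains}(R)$ is the set of such trains, and $\langle\mathrm{Trains}(R)\rangle$ is the rod set with one rod, of the same length and sign, for each nonempty train. $F(n,R)$ is the number of positive trains of length $n$ minus the number of negative ones, with $F(0,R)=1$, $F(n,R)=0$ for $n<0$. $C(n,R)$ = (number of positive rods of length $n$) $-$ (number of antirods of length $n$); $R\equiv S$ means $C(n,R)=C(n,S)$ for all $n>0$. Unions are disjoint unions; $\overline{Q}$ reverses all signs; $QR$ has one rod per pair $(q,r)\in Q\times R$, of length $\operatorname{len}q+\operatorname{len}r$ and sign $\operatorname{sign}q\operatorname{sign}r$. $R\xrightarrow{Q}S$ means $S\equiv R\cup\overline{Q}\cup QR$. The discrepancy is $D(n,R,S)=F(n,R)-\sum_{k\in S}(\operatorname{sign}k)F(n-\operatorname{len}k,R)$. *)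

(* Rod sets are encoded per length: R n is the finite list of
   rods of length n, each given as (tag, sign) with sign true = +1, false = -1. *)
From mathcomp Require Import all_boot all_order all_algebra.
Set Implicit Arguments. Unset Strict Implicit. Unset Printing Implicit Defensive.
Import GRing.Theory Num.Theory.
Local Open Scope ring_scope.

Definition rodset (T : Type) := nat -> seq (T * bool).

Definition is_rodset (T : eqType) (R : rodset T) : Prop :=
  R 0%N = [::] /\ forall n, uniq (R n).

Definition sgnz (b : bool) : int := if b then 1 else -1.

Definition rod (T : Type) := (nat * (T * bool))%type.

Section Trains.
Variable T : Type.
Variable R : rodset T.

(* All trains (finite sequences of rods of R) of total length n.
   The fuel argument is harmless: every rod has length >= 1. *)
Fixpoint trains_aux (fuel n : nat) : seq (seq (rod T)) :=
  if n == 0%N then [:: [::]] else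
  match fuel with
  | 0%N => [::]
  | fuel'.+1 =>
      flatten [seq [seq (l, x) :: t | x <- R l, t <- trains_aux fuel' (n - l)]
              | l <- iota 1 n]
  end.

Definition trains (n : nat) : seq (seq (rod T)) := trains_aux n n.

(* sign of a train = product of the signs: positive iff even number of antirods *)
Definition train_pos (t : seq (rod T)) : bool :=
  ~~ odd (count (fun x : rod T => ~~ x.2.2) t).

(* F(n,R) for n >= 0 (F(0,R) = 1: the empty train) *)
Definition F (n : nat) : int := \sum_(t <- trains n) sgnz (train_pos t).

Definition Fz (m : int) : int := if m is Posz n then F n else 0.

End Trains.

Definition C (T : Type) (n : nat) (R : rodset T) : int :=
  \sum_(x <- R n) sgnz x.2.

Definition requiv (T1 T2 : Type) (R : rodset T1) (S : rodset T2) : Prop :=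
  forall n : nat, (0 < n)%N -> C n R = C n S.

Definition runion (T1 T2 : Type) (R : rodset T1) (S : rodset T2)
  : rodset (T1 + T2) :=
  fun n => [seq (inl x.1, x.2) | x <- R n] ++ [seq (inr x.1, x.2) | x <- S n].

Definition rbar (T : Type) (Q : rodset T) : rodset T :=
  fun n => [seq (x.1, ~~ x.2) | x <- Q n].

(* QR: one rod per pair (q,r), length len q + len r, sign sign q * sign r *)
Definition rprod (T1 T2 : Type) (Q : rodset T1) (R : rodset T2)
  : rodset (T1 * T2) :=
  fun n => flatten [seq [seq ((q.1, r.1), q.2 == r.2) | q <- Q l, r <- R (n - l)%N]
                   | l <- iota 0 n.+1].

Definition rtrains (T : Type) (R : rodset T) : rodset (seq (rod T)) :=
  fun n => if n == 0%N then [::] else [seq (t, train_pos t) | t <- trains R n].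

Definition rarrow (T1 T2 T3 : Type) (R : rodset T1) (Q : rodset T2)
  (S : rodset T3) : Prop :=
  requiv S (runion R (runion (rbar Q) (rprod Q R))).

(* D(n,R,S) = F(n,R) - sum_{k in S} sign k * F(n - len k, R); rods k with
   len k > n contribute 0 since F vanishes at negative arguments, so the sum is
   over lengths l <= n. *)
Definition D (T1 T2 : Type) (n : nat) (R : rodset T1) (S : rodset T2) : int :=
  F R n - \sum_(l < n.+1) \sum_(k <- S l) sgnz k.2 * Fz R (n%:Z - l%:Z).

(** Read sequences [nat -> int] as formal power series under truncated
    convolution.  Write [r], [s], [q] for the series [C _ R], [C _ S], [C _ Q]
    and [f], [g] for [F R], [F S].  Splitting a train at its first rod gives
    [f = 1 + r f], i.e. [(1 - r) f = 1], and likewise [(1 - s) g = 1].  The four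
    conditions then amount to [1 - s = (1 + q)(1 - r)], [(1 - s) f = 1 + q]
    and, for the last two, [f = (1 + q) g]; these are equivalent because [1 - r]
    and [1 - s] are invertible, with inverses [f] and [g]. *)
From mathcomp Require Import all_boot all_order all_algebra.
From mathcomp Require Import ring.
Set Implicit Arguments. Unset Strict Implicit. Unset Printing Implicit Defensive.
Import GRing.Theory Num.Theory.
Local Open Scope ring_scope.

Definition conv (a b : nat -> int) (n : nat) : int :=
  \sum_(i < n.+1) a i * b (n - i)%N.

Definition delta (n : nat) : int := if n == 0%N then 1 else 0.

Definition delta_add (a : nat -> int) (n : nat) : int := delta n + a n.
Definition delta_sub (a : nat -> int) (n : nat) : int := delta n - a n.

Lemma eq_conv {a a' b b'} : a =1 a' -> b =1 b' -> conv a b =1 conv a' b'.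
Proof. by move=> Ea Eb n; apply: eq_bigr => i _; rewrite Ea Eb. Qed.

Lemma conv0 a b : conv a b 0 = a 0%N * b 0%N.
Proof. by rewrite /conv big_ord1. Qed.

Lemma convC a b : conv a b =1 conv b a.
Proof.
move=> n; rewrite /conv (reindex_inj rev_ord_inj) /=; apply: eq_bigr => i _.
by rewrite subSS subKn 1?mulrC // -ltnS.
Qed.

Lemma convDl a b c n : conv (fun k => a k + b k) c n = conv a c n + conv b c n.
Proof. by rewrite /conv -big_split; apply: eq_bigr => i _; rewrite mulrDl. Qed.

Lemma convBl a b c n : conv (fun k => a k - b k) c n = conv a c n - conv b c n.
Proof. by rewrite /conv -sumrB; apply: eq_bigr => i _; rewrite mulrBl. Qed.

Lemma conv1l a : conv delta a =1 a.
Proof.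
move=> n; rewrite /conv big_ord_recl /= mul1r subn0 big1 ?addr0 // => i _.
by rewrite mul0r.
Qed.

Lemma conv1r a : conv a delta =1 a.
Proof. by move=> n; rewrite convC conv1l. Qed.

Lemma conv_delta_addl a b n : conv (delta_add a) b n = b n + conv a b n.
Proof. by rewrite convDl conv1l. Qed.

Lemma conv_delta_subl a b n : conv (delta_sub a) b n = b n - conv a b n.
Proof. by rewrite convBl conv1l. Qed.

(* Up to degree [N], convolution is the coefficient sequence of a product of
   polynomials, which gives associativity for free. *)
Lemma coef_mul_poly_conv N a b i : (i <= N)%N ->
  (\poly_(k < N.+1) a k * \poly_(k < N.+1) b k)`_i = conv a b i.
Proof.
move=> le_iN; rewrite coefM; apply: eq_bigr => j _.
have le_jN : (j <= N)%N by apply: leq_trans le_iN; rewrite -ltnS.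
by rewrite !coef_poly !ltnS le_jN (leq_trans (leq_subr _ _) le_iN).
Qed.

Lemma convA a b c : conv (conv a b) c =1 conv a (conv b c).
Proof.
move=> n; pose P (x : nat -> int) : {poly int} := \poly_(k < n.+1) x k.
have le_n j : (j < n.+1)%N -> (j <= n)%N by [].
have -> : conv (conv a b) c n = (P a * P b * P c)`_n.
  rewrite coefM; apply: eq_bigr => j _.
  by rewrite coef_mul_poly_conv ?le_n // coef_poly ltnS leq_subr.
have -> : conv a (conv b c) n = (P a * (P b * P c))`_n.
  rewrite coefM; apply: eq_bigr => j _.
  by rewrite coef_mul_poly_conv ?leq_subr // coef_poly ltnS le_n.
by rewrite mulrA.
Qed.

Lemma conv_inv_eq u v a b : (forall n, conv u v n = delta n) ->
  (forall n, conv a u n = b n) <-> (forall n, a n = conv b v n).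
Proof.
move=> uv1; split=> E n.
  by rewrite -(eq_conv E (frefl v)) convA (eq_conv (frefl a) uv1) conv1r.
by rewrite (eq_conv E (frefl u)) convA (eq_conv (frefl b) (convC v u))
  (eq_conv (frefl b) uv1) conv1r.
Qed.

Lemma trains_auxS (T : Type) (R : rodset T) fuel n :
  trains_aux R fuel.+1 n.+1 =
  flatten [seq [seq (l, x) :: t | x <- R l, t <- trains_aux R fuel (n.+1 - l)]
          | l <- iota 1 n.+1].
Proof. by []. Qed.

Lemma trains_aux_fuel (T : Type) (R : rodset T) fuel1 fuel2 n :
  (n <= fuel1)%N -> (n <= fuel2)%N ->
  trains_aux R fuel1 n = trains_aux R fuel2 n.
Proof.
elim: fuel1 fuel2 n => [|fuel1 IH] [|fuel2] [|n] // le1 le2.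
rewrite !trains_auxS; congr flatten; apply/eq_in_map => l.
rewrite mem_iota => /andP[l_gt0 _]; congr flatten; apply: eq_map => x.
by congr map; apply: IH;
  rewrite leq_subLR (leq_trans _ (leq_add l_gt0 (leqnn _))).
Qed.

Lemma sgnzN b : sgnz (~~ b) = - sgnz b.
Proof. by case: b. Qed.

Lemma sgnz_train_pos_cons (T : Type) (x : rod T) t :
  sgnz (train_pos (x :: t)) = sgnz x.2.2 * sgnz (train_pos t).
Proof.
rewrite /train_pos /=; case: x.2.2 => /=; rewrite add0n ?mul1r //.
by rewrite sgnzN mulN1r.
Qed.

Lemma F0 (T : Type) (R : rodset T) : F R 0 = 1.
Proof. by rewrite /F /trains /= big_seq1. Qed.

Lemma F_first_rod (T : Type) (R : rodset T) n : (0 < n)%N ->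
  F R n = \sum_(l <- iota 1 n) C l R * F R (n - l).
Proof.
case: n => // n _; rewrite /F /trains trains_auxS big_flatten big_map.
apply: eq_big_seq => l; rewrite mem_iota => /andP[l_gt0 _].
rewrite big_allpairs_dep /C mulr_suml; apply: eq_bigr => x _.
rewrite mulr_sumr (@trains_aux_fuel _ R n (n.+1 - l)) //; last first.
  by rewrite leq_subLR (leq_trans _ (leq_add l_gt0 (leqnn _))).
by apply: eq_bigr => t _; rewrite sgnz_train_pos_cons.
Qed.

Definition Cs (T : Type) (R : rodset T) (n : nat) : int := C n R.

Lemma C0 (T : Type) (R : rodset T) : R 0%N = [::] -> C 0 R = 0.
Proof. by rewrite /C => ->; rewrite big_nil. Qed.

Lemma conv_delta_sub_C_F (T : Type) (R : rodset T) : R 0%N = [::] ->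
  forall n, conv (delta_sub (Cs R)) (F R) n = delta n.
Proof.
move=> R0 n; rewrite conv_delta_subl /Cs; case: n => [|n].
  by rewrite conv0 /= C0 // F0 mul0r subr0.
rewrite F_first_rod // /conv big_ord_recl C0 // mul0r add0r.
by rewrite (iotaDl 1 0) big_map -[iota 0 _]/(index_iota 0 n.+1) big_mkord subrr.
Qed.

Lemma C_runion (T1 T2 : Type) (A : rodset T1) (B : rodset T2) n :
  C n (runion A B) = C n A + C n B.
Proof. by rewrite /C /runion big_cat !big_map. Qed.

Lemma C_rbar (T : Type) (A : rodset T) n : C n (rbar A) = - C n A.
Proof.
by rewrite /C /rbar big_map -sumrN; apply: eq_bigr => x _; rewrite sgnzN.
Qed.

Lemma C_rprod (T1 T2 : Type) (A : rodset T1) (B : rodset T2) n :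
  C n (rprod A B) = conv (Cs A) (Cs B) n.
Proof.
rewrite /C /rprod /conv /Cs big_flatten big_map.
rewrite -[iota 0 _]/(index_iota 0 n.+1) big_mkord; apply: eq_bigr => l _.
rewrite big_allpairs_dep mulr_suml; apply: eq_bigr => x _.
by rewrite mulr_sumr; apply: eq_bigr => y _ /=; case: x.2; case: y.2.
Qed.

Lemma C_rtrains (T : Type) (A : rodset T) n : C n (rtrains A) = F A n - delta n.
Proof.
rewrite /C /rtrains /delta; case: n => [|n] /=; first by rewrite F0 subrr big_nil.
by rewrite big_map subr0.
Qed.

Lemma sum_Fz_conv (T1 T2 : Type) (A : rodset T1) (B : rodset T2) n :
  \sum_(l < n.+1) \sum_(k <- A l) sgnz k.2 * Fz B (n%:Z - l%:Z)
  = conv (Cs A) (F B) n.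
Proof.
apply: eq_bigr => l _; rewrite /Cs /C mulr_suml; apply: eq_bigr => x _.
by rewrite subzn // -ltnS.
Qed.

Section Characterizations.
Variables (T1 T2 T3 : Type) (R : rodset T1) (Q : rodset T2) (S : rodset T3).
Hypotheses (R0 : R 0%N = [::]) (Q0 : Q 0%N = [::]) (S0 : S 0%N = [::]).

Lemma rarrow_iff_conv : rarrow R Q S <->
  forall n, delta_sub (Cs S) n = conv (delta_add (Cs Q)) (delta_sub (Cs R)) n.
Proof.
have E n : conv (delta_add (Cs Q)) (delta_sub (Cs R)) n =
           delta n - C n (runion R (runion (rbar Q) (rprod Q R))).
  rewrite conv_delta_addl convC conv_delta_subl convC !C_runion C_rbar C_rprod.
  by rewrite /delta_sub /Cs; ring.
split=> [H n | H n _].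
  rewrite E /delta_sub /Cs; case: n => [|n]; last by rewrite H.
  by rewrite !C_runion C_rbar C_rprod conv0 /Cs !C0.
by have := H n; rewrite E /delta_sub /Cs => /addrI/oppr_inj.
Qed.

Lemma discrepancy_iff_conv :
  (forall n, (0 < n)%N -> D n R S = C n Q) <->
  forall n, conv (delta_sub (Cs S)) (F R) n = delta_add (Cs Q) n.
Proof.
have E n : D n R S = conv (delta_sub (Cs S)) (F R) n.
  by rewrite /D sum_Fz_conv conv_delta_subl.
split=> [H [|n] | H [|n] //].
- by rewrite conv0 /delta_add /delta_sub /Cs /= !C0 // F0; ring.
- by rewrite -E H // /delta_add add0r.
- by rewrite E H /delta_add add0r.
Qed.

Lemma F_sum_iff_conv :
  (forall n, (0 < n)%N ->
     F R n = F S n +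
       \sum_(l < n.+1) \sum_(q <- Q l) sgnz q.2 * Fz S (n%:Z - l%:Z)) <->
  forall n, F R n = conv (delta_add (Cs Q)) (F S) n.
Proof.
split=> [H [|n] | H [|n] //].
- by rewrite conv0 /delta_add /Cs /= C0 // !F0.
- by rewrite H // sum_Fz_conv conv_delta_addl.
- by rewrite H sum_Fz_conv conv_delta_addl.
Qed.

Lemma rtrains_equiv_iff_conv :
  requiv (rtrains R) (runion (rtrains S) (runion Q (rprod (rtrains S) Q))) <->
  forall n, F R n = conv (delta_add (Cs Q)) (F S) n.
Proof.
have E n : C n (runion (rtrains S) (runion Q (rprod (rtrains S) Q))) =
           conv (delta_add (Cs Q)) (F S) n - delta n.
  rewrite !C_runion C_rprod (eq_conv (C_rtrains S) (frefl _)) convBl conv1l.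
  by rewrite conv_delta_addl convC C_rtrains /Cs; ring.
split=> [H [|n] | H [|n] //].
- by rewrite conv0 /delta_add /Cs /= C0 // !F0.
- by have := H n.+1 isT; rewrite C_rtrains E => /addIr.
- by rewrite C_rtrains E H.
Qed.

End Characterizations.

Theorem mainTheorem8 (T1 T2 T3 : eqType)
  (R : rodset T1) (Q : rodset T2) (S : rodset T3) :
  is_rodset R -> is_rodset Q -> is_rodset S ->
  [<-> rarrow R Q S;
       forall n : nat, (0 < n)%N -> D n R S = C n Q;
       requiv (rtrains R) (runion (rtrains S) (runion Q (rprod (rtrains S) Q)));
       forall n : nat, (0 < n)%N ->
         F R n = F S n + \sum_(l < n.+1) \sum_(q <- Q l) sgnz q.2 * Fz S (n%:Z - l%:Z)].
Proof.
move=> [R0 _] [Q0 _] [S0 _].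
have invR n : conv (F R) (delta_sub (Cs R)) n = delta n.
  by rewrite convC conv_delta_sub_C_F.
have invS := conv_delta_sub_C_F S0.
tfae.
- move/(rarrow_iff_conv R0 Q0 S0)/(conv_inv_eq _ _ invR).
  by move/(discrepancy_iff_conv R Q0 S0).
- move/(discrepancy_iff_conv R Q0 S0) => H.
  apply/(rtrains_equiv_iff_conv R S Q0)/(conv_inv_eq _ _ invS) => n.
  by rewrite convC.
- by move/(rtrains_equiv_iff_conv R S Q0)/(F_sum_iff_conv R S Q0).
- move/(F_sum_iff_conv R S Q0)/(conv_inv_eq _ _ invS) => H.
  by apply/(rarrow_iff_conv R0 Q0 S0)/(conv_inv_eq _ _ invR) => n; rewrite convC.
Qed.
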